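(* Let $\Sigma=(X,\mathcal D,\phi)$ be a (forward complete) system and let $\mathcal A\subset X$ be bounded. If there exists a non-coercive Lyapunov function $V$ for $\Sigma$ with respect to $\mathcal A$, then $\mathcal A$ is uniformly globally weakly attractive.
   Context: $\mathbb R_+=[0,\infty)$. A system is a triple $\Sigma=(X,\mathcal D,\phi)$ where $(X,\|\cdot\|)$ is a normed linear space; $D$ is a nonempty subset of some normed linear space; $\mathcal D$ is a set of functions $d:\mathbb R_+\to D$ closed under time shifts $d\mapsto d(\cdot+\tau)$, $\tau\ge0$, and under concatenation ($d(s)=d_1(s)$ for $s\in[0,t]$, $d(s)=d_2(s-t)$ for $s>t$, any $d_1,d_2\in\mathcal D$, $t>0$); and $\phi:\mathbb R_+\times X\times\mathcal D\to X$ is an everywhere defined map (forward completeness) with $\phi(0,x,d)=x$; $\phi(t,x,d)=\phi(t,x,\tilde d)$ whenever $d=\tilde d$ on $[0,t]$; $t\mapsto\phi(t,x,d)$ continuous; and $\phi(h,\phi(t,x,d),d(t+\cdot))=\phi(t+h,x,d)$ for all $t,h\ge0$. $\|x\|_{\mathcal A}=\inf_{y\in\mathcal A}\|x-y\|$. $\mathcal K$: continuous strictly increasing $\gamma:\mathbb R_+\to\mathbb R_+$ with $\gamma(0)=0$; $\mathcal K_\infty$: unbounded elements of $\mathcal K$. For continuous $V:X\to\mathbb R$, $\dot V_d(x)=\liminf_{t\to0^+}\frac1t(V(\phi(t,x,d))-V(x))$. A continuous $V:X\to\mathbb R_+$ is a non-coercive Lyapunov function for $\Sigma$ w.r.t.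 $\mathcal A$ if $V(x)=0$ for $x\in\mathcal A$ and there are $\psi_2\in\mathcal K_\infty$, $\alpha\in\mathcal K$ with $0<V(x)\le\psi_2(\|x\|_{\mathcal A})$ and $\dot V_d(x)\le-\alpha(\|x\|_{\mathcal A})$ for all $x\in X\setminus\mathcal A$, $d\in\mathcal D$. $\mathcal A$ is uniformly globally weakly attractive if for all $\varepsilon,r>0$ there is $\tau$ such that for all $x$ with $\|x\|_{\mathcal A}\le r$ and all $d\in\mathcal D$ there exists $t\le\tau$ with $\|\phi(t,x,d)\|_{\mathcal A}\le\varepsilon$. *)

From HB Require Import structures.
From mathcomp Require Import all_boot all_order all_algebra.
From mathcomp Require Import all_classical all_reals all_analysis.
Set Implicit Arguments. Unset Strict Implicit. Unset Printing Implicit Defensive.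
Import Order.TTheory GRing.Theory Num.Theory.
Import numFieldNormedType.Exports.
Local Open Scope classical_set_scope.
Local Open Scope ring_scope.

(* A system Sigma = (X, Dcal, phi). Disturbances are modelled as functions
   R -> E (only their values on R_+ matter); Dcal is a set of such functions
   whose values on [0, oo) lie in Dset. *)
Definition is_system (R : realType) (X E : normedModType R)
  (Dset : set E) (Dcal : set (R -> E)) (phi : R -> X -> (R -> E) -> X) : Prop :=
  Dset !=set0 /\ Dcal !=set0 /\
  (forall d, Dcal d -> forall s, 0 <= s -> Dset (d s)) /\
  (forall d tau, Dcal d -> 0 <= tau -> Dcal (fun s => d (s + tau))) /\
  (forall d1 d2 t, Dcal d1 -> Dcal d2 -> 0 < t ->
     Dcal (fun s => if s <= t then d1 s else d2 (s - t))) /\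
  (forall x d, Dcal d -> phi 0 x d = x) /\
  (forall t x d d', Dcal d -> Dcal d' -> 0 <= t ->
     (forall s, 0 <= s <= t -> d s = d' s) -> phi t x d = phi t x d') /\
  (forall x d, Dcal d -> {within `[0, +oo[, continuous (fun t => phi t x d)}) /\
  (forall t h x d, Dcal d -> 0 <= t -> 0 <= h ->
     phi h (phi t x d) (fun s => d (t + s)) = phi (t + h) x d).

Definition dist_set (R : realType) (X : normedModType R) (A : set X) (x : X) : R :=
  inf [set `|x - y| | y in A].

Definition dini_lower (R : realType) (X E : normedModType R)
  (phi : R -> X -> (R -> E) -> X) (V : X -> R) (x : X) (d : R -> E) : \bar R :=
  ereal_sup [set ereal_inf [set ((V (phi t x d) - V x) / t)%:E | t in `]0, delta[]
            | delta in `]0, +oo[].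

Definition noncoercive_lyapunov (R : realType) (X E : normedModType R)
  (Dcal : set (R -> E)) (phi : R -> X -> (R -> E) -> X) (A : set X) (V : X -> R) : Prop :=
  continuous V /\ (forall x, 0 <= V x) /\ (forall x, A x -> V x = 0) /\
  exists (psi2 : R -> R) (alpha : R -> R),
    (* psi2 in K_infinity *)
    {within `[0, +oo[, continuous psi2} /\ psi2 0 = 0 /\
    {in `[0, +oo[ &, {mono psi2 : a b / a < b}} /\
    (forall M : R, exists r, 0 <= r /\ M < psi2 r) /\
    (* alpha in K *)
    {within `[0, +oo[, continuous alpha} /\ alpha 0 = 0 /\
    {in `[0, +oo[ &, {mono alpha : a b / a < b}} /\
    (forall x, ~ A x -> 0 < V x /\ V x <= psi2 (dist_set A x)) /\
    (forall x d, ~ A x -> Dcal d ->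
       (dini_lower phi V x d <= (- alpha (dist_set A x))%:E)%E).

Definition UGWA (R : realType) (X E : normedModType R)
  (Dcal : set (R -> E)) (phi : R -> X -> (R -> E) -> X) (A : set X) : Prop :=
  forall eps r : R, 0 < eps -> 0 < r -> exists tau : R,
    forall x d, dist_set A x <= r -> Dcal d ->
      exists t, 0 <= t <= tau /\ dist_set A (phi t x d) <= eps.

From HB Require Import structures.
From mathcomp Require Import all_boot all_order all_algebra.
From mathcomp Require Import all_classical all_reals all_analysis.
From mathcomp Require Import ring lra.
Set Implicit Arguments. Unset Strict Implicit. Unset Printing Implicit Defensive.
Import Order.TTheory GRing.Theory Num.Theory.
Import numFieldNormedType.Exports.
Local Open Scope classical_set_scope.
Local Open Scope ring_scope.

(* While a trajectory stays at distance more than eps from A, the Dini bound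
   makes V decrease at rate at least alpha eps; a continuous function whose
   lower right Dini derivative stays below -c drops by at least c t over time t
   (a supremum argument).  As V >= 0 and V x <= psi2 r at the start, the
   trajectory must come eps-close to A before time psi2 r / alpha eps + 1. *)

Lemma within_continuous_ge0_ball (R : realType) (g : R -> R) (s e : R) :
  {within `[0, +oo[, continuous g} -> 0 <= s -> 0 < e ->
  exists2 del : R, 0 < del & forall t, 0 <= t -> `|s - t| < del -> `|g s - g t| < e.
Proof.
move=> /subspace_continuousP g_cont s_ge0 e_gt0.
have /cvgrPdist_lt/(_ e e_gt0)/nbhs_ballP[del del_gt0 gdel] :=
  g_cont s (ltac:(by rewrite /= in_itv /= s_ge0)).
exists del => // t t_ge0 st; apply: gdel; first by rewrite /ball /= st.
by rewrite /= in_itv /= t_ge0.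
Qed.

Lemma right_descent_le (R : realType) (g : R -> R) (tau : R) :
  {within `[0, +oo[, continuous g} -> 0 <= tau ->
  (forall s, 0 <= s < tau -> forall del, 0 < del ->
     exists u, 0 < u < del /\ g (s + u) < g s) ->
  g tau <= g 0.
Proof.
move=> g_cont tau_ge0 g_desc.
pose S := [set t | 0 <= t <= tau /\ g t <= g 0].
have S0 : S 0 by split; rewrite ?lexx ?tau_ge0.
have S_ub : ubound S tau by move=> t [/andP[_ ->]].
have S_sup : has_sup S by split; [exists 0 | exists tau].
have le_sup := sup_upper_bound S_sup.
have sup_ge0 : 0 <= sup S by exact: le_sup.
have sup_le : sup S <= tau by apply: ge_sup => //; exists 0.
have g_sup : g (sup S) <= g 0.
  rewrite leNgt; apply/negP => g_gt.
  have gap_gt0 : 0 < g (sup S) - g 0 by rewrite subr_gt0.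
  have [del del_gt0 gdel] := within_continuous_ge0_ball g_cont sup_ge0 gap_gt0.
  have [t St t_gt] := sup_adherent del_gt0 S_sup.
  have t_le := le_sup _ St; case: St => /andP[t_ge0 _] gt.
  have st_lt : `|sup S - t| < del by rewrite ger0_norm ?subr_ge0 //; lra.
  have := gdel t t_ge0 st_lt; rewrite ltr_norml => /andP[_]; lra.
move: sup_le; rewrite le_eqVlt => /orP[/eqP <- // | sup_lt].
have room : 0 < tau - sup S by rewrite subr_gt0.
have sup_in : 0 <= sup S < tau by rewrite sup_ge0 sup_lt.
have [u [/andP[u_gt0 u_lt] g_u]] := g_desc _ sup_in _ room.
have /le_sup : S (sup S + u) by split; [apply/andP; split; lra | lra].
lra.
Qed.

Lemma right_descent_rate_le (R : realType) (w : R -> R) (c tau : R) :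
  {within `[0, +oo[, continuous w} -> 0 <= tau ->
  (forall s, 0 <= s < tau -> forall del, 0 < del ->
     exists u, 0 < u < del /\ (w (s + u) - w s) / u < - c) ->
  w tau + c * tau <= w 0.
Proof.
move=> w_cont tau_ge0 w_desc.
pose g t := w t + c * t.
suff : g tau <= g 0 by rewrite /g mulr0 addr0.
apply: right_descent_le => //.
  move=> t; apply: continuousD; first exact: w_cont.
  by apply: continuous_subspaceT => y; apply: continuousM; [exact: cvg_cst | exact: cvg_id].
move=> s s_in del del_gt0; have [u [u_in q_lt]] := w_desc s s_in del del_gt0.
have /andP[u_gt0 _] := u_in.
exists u; split=> //; rewrite ltr_pdivrMr // in q_lt.
rewrite /g mulrDr; lra.
Qed.

Lemma dini_lower_lt (R : realType) (X E : normedModType R)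
    (phi : R -> X -> (R -> E) -> X) (V : X -> R) (x : X) (d : R -> E) (c : R) :
  (dini_lower phi V x d < c%:E)%E -> forall del, 0 < del ->
  exists u, 0 < u < del /\ (V (phi u x d) - V x) / u < c.
Proof.
move=> dini_lt del del_gt0.
have del_in : del \in `]0, +oo[ by rewrite /= in_itv /= del_gt0.
have /ereal_inf_lt[_ [u u_in <-]] :=
  le_lt_trans (ereal_sup_ubound (ex_intro2 _ _ del del_in erefl)) dini_lt.
by rewrite lte_fin => q_lt; exists u; move: u_in; rewrite /= in_itv.
Qed.

Lemma dist_set_ge0 (R : realType) (X : normedModType R) (A : set X) (x : X) :
  0 <= dist_set A x.
Proof.
have [->|/set0P[y Ay]] := eqVneq A set0; first by rewrite /dist_set image_set0 inf0.
by apply: lb_le_inf; [exists `|x - y|; exists y | move=> _ [z _ <-]].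
Qed.

Lemma dist_set_mem (R : realType) (X : normedModType R) (A : set X) (x : X) :
  A x -> dist_set A x = 0.
Proof.
move=> Ax; apply/eqP; rewrite eq_le dist_set_ge0 andbT.
rewrite -(normr0 X) -(subrr x).
by apply: ge_inf; [exists 0 => _ [z _ <-] | exists x].
Qed.

Section LyapunovDecrease.
Variables (R : realType) (X E : normedModType R) (Dcal : set (R -> E)).
Variables (phi : R -> X -> (R -> E) -> X) (V : X -> R).
Hypothesis shift_closed :
  forall d tau, Dcal d -> 0 <= tau -> Dcal (fun s => d (s + tau)).
Hypothesis phi0 : forall x d, Dcal d -> phi 0 x d = x.
Hypothesis phi_cont :
  forall x d, Dcal d -> {within `[0, +oo[, continuous (fun t => phi t x d)}.
Hypothesis phi_cocycle : forall t h x d, Dcal d -> 0 <= t -> 0 <= h ->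
  phi h (phi t x d) (fun s => d (t + s)) = phi (t + h) x d.
Hypothesis V_cont : continuous V.

Lemma lyapunov_decrease (x : X) (d : R -> E) (c tau : R) :
  Dcal d -> 0 <= tau ->
  (forall s, 0 <= s < tau -> forall d', Dcal d' ->
     (dini_lower phi V (phi s x d) d' < (- c)%:E)%E) ->
  V (phi tau x d) + c * tau <= V x.
Proof.
move=> Dd tau_ge0 dini_lt; rewrite -{2}(phi0 x Dd).
apply: (right_descent_rate_le (w := fun t => V (phi t x d))) => //.
  by move=> t; apply: continuous_comp; [exact: phi_cont | exact: V_cont].
move=> s s_in del del_gt0; have /andP[s_ge0 _] := s_in.
have Dds : Dcal (fun u => d (s + u)).
  by under eq_fun do rewrite addrC; exact: shift_closed.
have [u [u_in q_lt]] := dini_lower_lt (dini_lt s s_in _ Dds) del_gt0.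
have /andP[u_gt0 _] := u_in.
by exists u; split=> //; rewrite -phi_cocycle // ltW.
Qed.

End LyapunovDecrease.

Theorem proposition25 (R : realType) (X E : normedModType R)
  (Dset : set E) (Dcal : set (R -> E)) (phi : R -> X -> (R -> E) -> X)
  (A : set X) :
  is_system Dset Dcal phi ->
  bounded_set A ->
  (exists V : X -> R, noncoercive_lyapunov Dcal phi A V) ->
  UGWA Dcal phi A.
Proof.
move=> [_ [_ [_ [shift_closed [_ [phi0 [_ [phi_cont phi_cocycle]]]]]]]] _.
move=> [V [V_cont [V_ge0 [_ [psi2 [alpha [_ [psi2_0 [psi2_mono
  [_ [_ [alpha0 [alpha_mono [V_le_psi2 V_dini]]]]]]]]]]]]]].
move=> eps r eps_gt0 r_gt0.
have nonneg (z : R) : 0 <= z -> z \in `[0, +oo[ by rewrite in_itv /= => ->.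
have alpha_eps : 0 < alpha eps by rewrite -alpha0 alpha_mono ?nonneg // ltW.
have psi2_r : 0 < psi2 r by rewrite -psi2_0 psi2_mono ?nonneg // ltW.
pose tau := psi2 r / alpha eps + 1.
have tau_ge0 : 0 <= tau by rewrite addr_ge0 // ltW // divr_gt0.
exists tau => x d dist_x Dd.
have [//|no_hit] := pselect (exists t, 0 <= t <= tau /\ dist_set A (phi t x d) <= eps).
have far t : 0 <= t <= tau -> eps < dist_set A (phi t x d).
  by move=> t_in; rewrite ltNge; apply/negP => close; apply: no_hit; exists t.
have outside t : 0 <= t <= tau -> ~ A (phi t x d).
  by move=> /far + /dist_set_mem dist0; rewrite dist0; lra.
have decrease : V (phi tau x d) + alpha eps * tau <= V x.
  apply: (lyapunov_decrease shift_closed phi0 phi_cont phi_cocycle V_cont) => //.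
  move=> s /andP[s_ge0 s_lt] d' Dd'; have s_in : 0 <= s <= tau by rewrite s_ge0 ltW.
  apply: le_lt_trans (V_dini _ _ (outside s s_in) Dd') _.
  by rewrite lte_fin ltrN2 alpha_mono ?nonneg ?far ?dist_set_ge0 // ltW.
have Vx_le : V x <= psi2 r.
  have x_out : ~ A x by rewrite -(phi0 x d Dd); apply: outside; rewrite lexx.
  have [_ /le_trans->] // := V_le_psi2 x x_out.
  by rewrite leNgt psi2_mono ?nonneg ?dist_set_ge0 ?(ltW r_gt0) // -leNgt.
have := V_ge0 (phi tau x d).
have : alpha eps * tau = psi2 r + alpha eps by rewrite /tau; field; rewrite gt_eqF.
lra.
Qed.
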